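(* Let $A\in\{0,1\}^{n\times n}$ be a decomposable maximal matrix and let $n=\prod_{j=1}^m p_j^{k_j}$ be the prime factorization of $n$ (distinct primes $p_j$, exponents $k_j\ge1$). Let $\mathcal{L}=\{n_1:(n_1,n_2)\text{ is a compatible pair and } A \text{ admits an } (n_1,n_2)\text{ factorization}\}$. For any branch $\mathfrak{l}_0<\dots<\mathfrak{l}_q$ of $\mathcal{L}$, let $(n_1,\dots,n_\ell)=(\mathfrak{l}_0,\mathfrak{l}_1/\mathfrak{l}_0,\dots,\mathfrak{l}_q/\mathfrak{l}_{q-1},n/\mathfrak{l}_q)$ be the sizes of the factorization resulting from the branch. Then: (1) $n_i\in\{p_1,\dots,p_m\}$ for all $i=1,\dots,\ell$; (2) $\ell=\sum_{j=1}^m k_j$; (3) the number of branches of $\mathcal{L}$ is $\dfrac{\ell!}{\prod_{j=1}^m k_j!}$.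
   Context: Kronecker products of binary matrices use Boolean arithmetic ($1+1=1$). An $(n_1,\dots,n_m)$ factorization of $A$ is $A=A_1\otimes\cdots\otimes A_m$ with $A_i\in\{0,1\}^{n_i\times n_i}$, $\prod n_i=n$. A compatible pair for $n$ is $(n_1,n_2)$ with $n_1,n_2$ positive divisors of $n$ different from $1$ and $n$ and $n_1n_2=n$. $A$ is decomposable if it admits an $(n_1,\dots,n_\ell)$ factorization with $\ell>1$ and all $n_i>1$; a decomposable $A$ is maximal if it admits an $(n_1,n_2)$ factorization for every compatible pair $(n_1,n_2)$. For a finite set $\mathcal{X}\subset\mathbb{N}$, $\overline{\mathcal{X}}$ denotes the set of elements of $\mathcal{X}$ that are not multiples of another element of $\mathcal{X}$. A branch of $\mathcal{L}$ is a sequence $\mathfrak{l}_0,\dots,\mathfrak{l}_q$ ($q\ge0$) with $\mathfrak{l}_0\in\overline{\mathcal{L}}$; for $k\ge1$, $\mathfrak{l}_k\in\overline{\mathcal{M}_k}$ where $\mathcal{M}_k$ is the set of elements of $\mathcal{L}$ that are multiples of $\mathfrak{l}_{k-1}$ other than $\mathfrak{l}_{k-1}$; the sequence stops at $\mathfrak{l}_q$ when $\mathcal{L}$ contains no multiple of $\mathfrak{l}_q$ other than itself. *)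

From mathcomp Require Import all_boot all_order all_algebra.
Set Implicit Arguments. Unset Strict Implicit. Unset Printing Implicit Defensive.

(* Binary matrices of size k are 'M[bool]_k; the (Boolean) product of two
   entries is &&.  A Kronecker product only multiplies entries, so the
   Boolean addition 1+1=1 never intervenes. *)

(* entry (i,j) of a k x k binary matrix, indices given as nat (false if out of range) *)
Definition mentry (k : nat) (M : 'M[bool]_k) (i j : nat) : bool :=
  match @insub nat (fun x => x < k) 'I_k i, @insub nat (fun x => x < k) 'I_k j with
  | Some i', Some j' => M i' j'
  | _, _ => false
  end.

Definition mxlist := seq {k : nat & 'M[bool]_k}.

Definition sizes_of (fs : mxlist) : seq nat := map tag fs.

(* entry (i,j) of A_1 (x) A_2 (x) ... (x) A_m, with the usual index convention
   (A (x) B)[i1*n2+i2, j1*n2+j2] = A[i1,j1] * B[i2,j2]; empty product = [1]. *)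
Fixpoint kronE (fs : mxlist) (i j : nat) : bool :=
  match fs with
  | [::] => true
  | F :: rest =>
      let r := \prod_(k <- sizes_of rest) k in
      mentry (projT2 F) (i %/ r) (j %/ r) && kronE rest (i %% r) (j %% r)
  end.

Definition factorization (n : nat) (A : 'M[bool]_n) (ns : seq nat) : Prop :=
  \prod_(k <- ns) k = n /\
  exists fs : mxlist, sizes_of fs = ns /\
    forall i j : 'I_n, A i j = kronE fs i j.

Definition compatible (n n1 n2 : nat) : Prop :=
  [/\ 0 < n1, n1 %| n, n1 != 1, n1 != n &
   [/\ 0 < n2, n2 %| n, n2 != 1, n2 != n & n1 * n2 = n]].

Definition decomposable (n : nat) (A : 'M[bool]_n) : Prop :=
  exists ns : seq nat, [/\ 1 < size ns, all (fun k => 1 < k) ns & factorization A ns].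

Definition maximal (n : nat) (A : 'M[bool]_n) : Prop :=
  decomposable A /\
  forall n1 n2, compatible n n1 n2 -> factorization A [:: n1; n2].

Definition Lset (n : nat) (A : 'M[bool]_n) (n1 : nat) : Prop :=
  exists n2, compatible n n1 n2 /\ factorization A [:: n1; n2].

Definition in_overline (X : nat -> Prop) (x : nat) : Prop :=
  X x /\ forall y, X y -> y %| x -> y = x.

Definition proper_multiples (L : nat -> Prop) (a : nat) (x : nat) : Prop :=
  L x /\ a %| x /\ x <> a.

Fixpoint branch_steps (L : nat -> Prop) (a : nat) (s : seq nat) : Prop :=
  match s with
  | [::] => forall y, proper_multiples L a y -> False
  | b :: s' => in_overline (proper_multiples L a) b /\ branch_steps L b s'
  end.

Definition branch (L : nat -> Prop) (s : seq nat) : Prop :=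
  match s with
  | [::] => False
  | a :: s' => in_overline L a /\ branch_steps L a s'
  end.

Definition branch_sizes (n : nat) (s : seq nat) : seq nat :=
  match s with
  | [::] => [::]
  | a :: s' => a :: pairmap (fun x y => y %/ x) a s' ++ [:: n %/ last a s']
  end.

From mathcomp Require Import all_boot all_order all_algebra.
Set Implicit Arguments. Unset Strict Implicit. Unset Printing Implicit Defensive.

(* Maximality makes L the set of all divisors of n other than 1 and n.  A branch
   therefore climbs the divisor lattice by covering steps: l_k is a minimal proper
   multiple of l_(k-1) among these divisors exactly when l_k / l_(k-1) is prime, and
   the branch stops exactly when n / l_q is prime.  Hence the sizes of a branch are
   an ordering of the prime factors of n counted with multiplicity, and taking
   partial products inverts this.  Branches are thus in bijection with the distinct
   permutations of that multiset, which are counted by the multinomial coefficient. *)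

Definition prime_factors (n : nat) : seq nat := tally_seq (prime_decomp n).

Lemma size_prime_factors n : size (prime_factors n) = \sum_(p <- primes n) logn p n.
Proof. by rewrite size_tally_seq prime_decompE sumnE !big_map. Qed.

Lemma count_prime_factors n p : count_mem p (prime_factors n) = logn p n.
Proof.
rewrite count_flatten sumnE !big_map prime_decompE big_map.
under eq_bigr => q _ do rewrite count_nseq.
have [pn | pNn] := boolP (p \in primes n).
  rewrite (bigD1_seq p) ?primes_uniq //= eqxx mul1n big1 ?addn0 // => q.
  by rewrite eq_sym => /negbTE ->.
rewrite big1_seq => [|q /andP[_ qn]]; last by rewrite /= (negbTE (memPn pNn q qn)).
by move: pNn; rewrite -logn_gt0 lt0n negbK => /eqP.
Qed.

Lemma mem_prime_factors n p : (p \in prime_factors n) = (p \in primes n).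
Proof. by rewrite -has_pred1 has_count count_prime_factors logn_gt0. Qed.

Lemma prod_prime_factors n : 0 < n -> \prod_(p <- prime_factors n) p = n.
Proof.
move=> n_gt0; rewrite [RHS](prod_prime_decomp n_gt0) big_flatten /= big_map.
by apply: eq_bigr => -[p k] _; rewrite big_nseq iter_muln_1.
Qed.

Lemma prod_primes_gt0 r : all prime r -> 0 < \prod_(p <- r) p.
Proof. by move=> r_pr; rewrite big_seq prodn_cond_gt0 // => p /(allP r_pr)/prime_gt0. Qed.

Lemma logn_prod_primes r p : all prime r -> logn p (\prod_(q <- r) q) = count_mem p r.
Proof.
elim: r => [|q r IH] /=; first by rewrite big_nil logn1.
case/andP=> q_pr r_pr; rewrite big_cons lognM ?prod_primes_gt0 ?prime_gt0 //.
by rewrite logn_prime // IH // eq_sym.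
Qed.

Lemma perm_prime_factorsP n r : 0 < n ->
  reflect (all prime r /\ \prod_(p <- r) p = n) (perm_eq r (prime_factors n)).
Proof.
move=> n_gt0; apply: (iffP idP) => [r_n | [r_pr <-]].
  split; last by rewrite (perm_big _ r_n) prod_prime_factors.
  by apply/allP => p; rewrite (perm_mem r_n) mem_prime_factors mem_primes => /andP[].
by apply/allP => p _ /=; rewrite count_prime_factors logn_prod_primes.
Qed.

Section Multinomial.
Variable T : eqType.
Implicit Types s u : seq T.

Lemma sum_count_undup s : \sum_(x <- undup s) count_mem x s = size s.
Proof.
rewrite -(perm_size (perm_count_undup s)) size_flatten /shape -map_comp sumnE big_map.
by apply: eq_bigr => x _; rewrite /= size_nseq.
Qed.

Lemma prod_fact_count_rem s u x : uniq u -> x \in u -> x \in s ->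
  \prod_(y <- u) (count_mem y s)`! =
    count_mem x s * \prod_(y <- u) (count_mem y (rem x s))`!.
Proof.
move=> u_uniq xu xs.
have countE y : count_mem y s = (x == y) + count_mem y (rem x s).
  by rewrite (permP (perm_to_rem xs)).
rewrite (bigD1_seq x) //= (bigD1_seq x) //= countE eqxx add1n factS mulnA.
by congr (_ * _); apply: eq_bigr => y yx; rewrite countE eq_sym (negbTE yx).
Qed.

(* Every permutation of s starts with some x in undup s and continues with a
   permutation of rem x s; induct on the size of s. *)
Lemma size_permutations_count s u : uniq u -> {subset s <= u} ->
  size (permutations s) * \prod_(x <- u) (count_mem x s)`! = (size s)`!.
Proof.
move=> u_uniq; move sz_s: (size s) => m; elim: m s sz_s => [|m IH] s sz_s su.
  by case: s sz_s su => // _ _; rewrite big1_seq.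
rewrite (perm_size (permutationsE _)) ?sz_s // size_allpairs_dep sumnE big_map.
rewrite big_distrl /= (eq_big_seq (fun x => count_mem x s * m`!)) => [|x].
  by rewrite -big_distrl /= sum_count_undup sz_s factS mulnC.
rewrite mem_undup => xs; rewrite (prod_fact_count_rem u_uniq (su x xs) xs) mulnCA IH //.
  by rewrite size_rem // sz_s.
by move=> y /mem_rem /su.
Qed.

End Multinomial.

Lemma prod_gt1_composite (ns : seq nat) : 1 < size ns -> all (fun k => 1 < k) ns ->
  1 < \prod_(k <- ns) k /\ ~~ prime (\prod_(k <- ns) k).
Proof.
case: ns => [|x [|y r]] //= _ /and3P[x_gt1 y_gt1 r_gt1]; rewrite !big_cons.
have r_gt0 : 0 < \prod_(k <- r) k.
  by rewrite big_seq prodn_cond_gt0 // => k /(allP r_gt1)/ltnW.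
have yr_gt1 : 1 < y * \prod_(k <- r) k by rewrite (leq_trans y_gt1) // leq_pmulr.
split; first by rewrite (leq_trans yr_gt1) // leq_pmull // ltnW.
have x_neq1 : x != 1 by rewrite neq_ltn x_gt1 orbT.
apply/negP => /prime_nt_dvdP/(_ x_neq1)/(_ (dvdn_mulr _ (dvdnn x)))/eqP.
by rewrite -{1}[x]muln1 eqn_pmul2l ?(ltnW x_gt1) // => /eqP yr1; rewrite -yr1 in yr_gt1.
Qed.

Lemma decomposable_composite n (A : 'M[bool]_n) : decomposable A -> 1 < n /\ ~~ prime n.
Proof.
by case=> ns [size_ns ns_gt1 [prod_ns _]]; rewrite -prod_ns; apply: prod_gt1_composite.
Qed.

Definition nontrivial_divisor (n x : nat) : bool := [&& 1 < x, x < n & x %| n].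

Lemma nontrivial_divisor_dvdn n b c :
  nontrivial_divisor n b -> c %| b -> 1 < c -> nontrivial_divisor n c.
Proof.
case/and3P=> b_gt1 b_lt_n b_n c_b c_gt1.
rewrite /nontrivial_divisor c_gt1 (dvdn_trans c_b b_n) andbT.
by rewrite (leq_ltn_trans (dvdn_leq (ltnW b_gt1) c_b) b_lt_n).
Qed.

Lemma compatible_nontrivial_divisor n x y : compatible n x y -> nontrivial_divisor n x.
Proof.
case=> x_gt0 x_n x_neq1 x_neqn [y_gt0 _ _ _ xy_n].
have n_gt0 : 0 < n by rewrite -xy_n muln_gt0 x_gt0.
apply/and3P; split=> //; first by rewrite ltn_neqAle eq_sym x_neq1.
by rewrite ltn_neqAle x_neqn dvdn_leq.
Qed.

Lemma nontrivial_divisor_compatible n x : nontrivial_divisor n x -> compatible n x (n %/ x).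
Proof.
case/and3P=> x_gt1 x_lt_n x_n.
have n_gt0 : 0 < n by apply: leq_ltn_trans x_lt_n.
have y_gt1 : 1 < n %/ x by rewrite ltn_divRL // mul1n.
have y_lt_n : n %/ x < n by rewrite ltn_Pdiv.
split; rewrite ?(ltnW x_gt1) ?(gtn_eqF x_gt1) ?(ltn_eqF x_lt_n) //.
split; rewrite ?(ltnW y_gt1) ?(gtn_eqF y_gt1) ?(ltn_eqF y_lt_n) ?dvdn_div //.
by rewrite mulnC divnK.
Qed.

Lemma Lset_maximal n (A : 'M[bool]_n) :
  maximal A -> forall x, Lset A x <-> nontrivial_divisor n x.
Proof.
case=> _ A_max x; split=> [[y [xy_comp _]] | x_div].
  exact: compatible_nontrivial_divisor xy_comp.
have xy_comp := nontrivial_divisor_compatible x_div.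
by exists (n %/ x); split=> //; apply: A_max.
Qed.

Lemma prime_divn_cover a b : 0 < b -> a %| b -> a != b ->
  prime (b %/ a) <-> (forall c, a %| c -> c %| b -> c = a \/ c = b).
Proof.
move=> b_gt0 a_b a_neq_b.
have a_gt0 := dvdn_gt0 b_gt0 a_b.
have bE : b = b %/ a * a by rewrite divnK.
split=> [/primeP[_ t_prime] c /dvdnP[u ->] | b_cover].
  rewrite bE dvdn_pmul2r // => /t_prime /pred2P[-> | ->]; first by left; rewrite mul1n.
  by right.
apply/primeP; split=> [|u u_t].
  rewrite ltn_neqAle eq_sym divn_gt0 // dvdn_leq // andbT.
  by apply: contra_neq a_neq_b => t1; rewrite bE t1 mul1n.
have [/eqP | /eqP] : u * a = a \/ u * a = b.
  by apply: b_cover; rewrite ?dvdn_mull // bE dvdn_pmul2r.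
  by rewrite -{2}[a]mul1n eqn_pmul2r // => /eqP ->.
by rewrite {1}bE eqn_pmul2r // => /eqP ->; rewrite eqxx orbT.
Qed.

Lemma proper_multiple_gt1 a c : 0 < c -> a %| c -> c != a -> 1 < c.
Proof.
move=> c_gt0 a_c c_neq_a; rewrite ltn_neqAle c_gt0 andbT eq_sym.
by apply: contra_neq c_neq_a => c1; move: a_c; rewrite c1 dvdn1 => /eqP ->.
Qed.

Lemma in_overline_ext (X Y : nat -> Prop) :
  (forall x, X x <-> Y x) -> forall b, in_overline X b <-> in_overline Y b.
Proof. by move=> XY b; split=> -[/XY Xb b_min]; split=> // y /XY; apply: b_min. Qed.

(* The full product, which is n, is not part of the chain. *)
Fixpoint partial_products (a : nat) (r : seq nat) : seq nat :=
  if r is x :: r' then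
    if r' is [::] then [::] else a * x :: partial_products (a * x) r'
  else [::].

Section DivisorChains.
Variables (n : nat) (L : nat -> Prop).
Hypothesis L_divisor : forall x, L x <-> nontrivial_divisor n x.

Lemma proper_multiplesE a x :
  proper_multiples L a x <-> [&& nontrivial_divisor n x, a %| x & x != a].
Proof.
by split=> [[/L_divisor -> [-> /eqP ->]] | /and3P[/L_divisor x_div a_x /eqP x_neq_a]].
Qed.

Lemma in_overline_proper_multiples a b :
  in_overline (proper_multiples L a) b <->
  [&& nontrivial_divisor n b, a %| b & prime (b %/ a)].
Proof.
split=> [[/proper_multiplesE/and3P[b_div a_b b_neq_a] b_min] | /and3P[b_div a_b ba_prime]];
  have b_gt0 : 0 < b by case/andP: b_div => /ltnW.
  rewrite b_div a_b; apply/(prime_divn_cover b_gt0 a_b); first by rewrite eq_sym.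
  move=> c a_c c_b; have [-> | c_neq_a] := eqVneq c a; [by left | right].
  apply: (b_min c _ c_b); apply/proper_multiplesE; rewrite a_c c_neq_a !andbT.
  apply: (nontrivial_divisor_dvdn b_div c_b).
  exact: proper_multiple_gt1 (dvdn_gt0 b_gt0 c_b) a_c c_neq_a.
have b_neq_a : b != a.
  by apply: contraTneq ba_prime => b_eq_a; rewrite b_eq_a divnn -b_eq_a b_gt0.
split=> [|y /proper_multiplesE/and3P[_ a_y y_neq_a] y_b].
  by apply/proper_multiplesE; rewrite b_div a_b b_neq_a.
have a_neq_b : a != b by rewrite eq_sym.
have [y_eq_a | //] := (prime_divn_cover b_gt0 a_b a_neq_b).1 ba_prime y a_y y_b.
by rewrite y_eq_a eqxx in y_neq_a.
Qed.

Lemma no_proper_multiples a : a %| n -> a < n ->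
  (forall y, ~ proper_multiples L a y) <-> prime (n %/ a).
Proof.
move=> a_n a_lt_n; have n_gt0 : 0 < n := leq_ltn_trans (leq0n a) a_lt_n.
have a_neq_n : a != n by rewrite neq_ltn a_lt_n.
split=> [no_multiple | na_prime y /proper_multiplesE/and3P[y_div a_y y_neq_a]].
  apply/(prime_divn_cover n_gt0 a_n a_neq_n) => c a_c c_n.
  have [-> | c_neq_a] := eqVneq c a; [by left | right].
  apply/eqP/negPn/negP => c_neq_n; apply: (no_multiple c); apply/proper_multiplesE.
  rewrite a_c c_neq_a !andbT; apply/and3P; split=> //.
    exact: proper_multiple_gt1 (dvdn_gt0 n_gt0 c_n) a_c c_neq_a.
  by rewrite ltn_neqAle c_neq_n dvdn_leq.
case/and3P: y_div => _ y_lt_n y_n.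
have [y_eq_a | y_eq_n] := (prime_divn_cover n_gt0 a_n a_neq_n).1 na_prime y a_y y_n.
  by rewrite y_eq_a eqxx in y_neq_a.
by rewrite y_eq_n ltnn in y_lt_n.
Qed.

Fixpoint prime_chain (a : nat) (s : seq nat) : bool :=
  if s is b :: s' then
    [&& nontrivial_divisor n b, a %| b, prime (b %/ a) & prime_chain b s']
  else prime (n %/ a).

Lemma branch_stepsP a s : a %| n -> a < n -> branch_steps L a s <-> prime_chain a s.
Proof.
elim: s a => [|b s IH] a a_n a_lt_n /=; first exact: no_proper_multiples.
split=> [[/in_overline_proper_multiples/and3P[b_div a_b ba_prime]] |
         /and4P[b_div a_b ba_prime]]; case/and3P: (b_div) => _ b_lt_n b_n.
  by move/(IH b b_n b_lt_n) => chain; rewrite b_div a_b ba_prime.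
move/(IH b b_n b_lt_n) => steps; split=> //.
by apply/in_overline_proper_multiples; rewrite b_div a_b ba_prime.
Qed.

Definition chain_ratios (a : nat) (s : seq nat) : seq nat :=
  pairmap (fun x y => y %/ x) a s ++ [:: n %/ last a s].

Lemma branch_sizesE s : s != [::] -> branch_sizes n s = chain_ratios 1 s.
Proof. by case: s => [|a s] //= _; rewrite /chain_ratios /= divn1. Qed.

Lemma prime_chain_ratios a s : a %| n -> prime_chain a s ->
  all prime (chain_ratios a s) /\ a * \prod_(k <- chain_ratios a s) k = n.
Proof.
elim: s a => [|b s IH] a a_n /=.
  by move=> na_prime; rewrite /chain_ratios /= na_prime big_seq1 mulnC divnK.
case/and4P=> /and3P[_ _ b_n] a_b ba_prime /(IH b b_n)[ratios_prime ratios_prod].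
rewrite /chain_ratios /= -/(chain_ratios b s) ba_prime ratios_prime big_cons.
by rewrite mulnA [a * _]mulnC divnK.
Qed.

Lemma chain_ratiosK a s : prime_chain a s -> partial_products a (chain_ratios a s) = s.
Proof.
elim: s a => [|b s IH] a //= /and4P[_ a_b _ chain].
rewrite /chain_ratios /= -/(chain_ratios b s).
case ratiosE: (chain_ratios b s) => [|y r].
  by move/(congr1 size): ratiosE; rewrite size_cat addn1.
have -> : a * (b %/ a) = b by rewrite mulnC divnK.
by rewrite -ratiosE IH.
Qed.

Lemma partial_productsK a r : 0 < a -> all prime r -> a * \prod_(k <- r) k = n ->
  r != [::] -> chain_ratios a (partial_products a r) = r.
Proof.
elim: r a => [|x r IH] a //= a_gt0 /andP[x_prime r_prime].
case: r IH r_prime => [|y r] IH r_prime.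
  by rewrite big_seq1 => ax_n _; rewrite /chain_ratios /= -ax_n mulKn.
rewrite big_cons mulnA => prod_r _.
rewrite /chain_ratios /= -/(chain_ratios (a * x) _) IH ?mulKn //.
by rewrite muln_gt0 a_gt0 prime_gt0.
Qed.

Lemma prime_chain_partial_products a r : 0 < a -> all prime r ->
  a * \prod_(k <- r) k = n -> r != [::] -> prime_chain a (partial_products a r).
Proof.
elim: r a => [|x r IH] a //= a_gt0 /andP[x_prime r_prime].
case: r IH r_prime => [|y r] IH r_prime.
  by rewrite big_seq1 => ax_n _ /=; rewrite -ax_n mulKn.
rewrite big_cons mulnA => prod_r _ /=.
have ax_gt0 : 0 < a * x by rewrite muln_gt0 a_gt0 prime_gt0.
rewrite mulKn // x_prime dvdn_mulr // IH // !andbT; apply/and3P; split.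
- by rewrite (leq_trans (prime_gt1 x_prime)) // leq_pmull.
- rewrite -prod_r ltn_Pmulr // (leq_trans (prime_gt1 (allP r_prime y _))) ?mem_head //.
  by rewrite big_cons leq_pmulr // prod_primes_gt0 //; case/andP: r_prime.
- by rewrite -prod_r dvdn_mulr.
Qed.

Hypotheses (n_gt1 : 1 < n) (n_composite : ~~ prime n).

Lemma branchP s : branch L s <-> prime_chain 1 s.
Proof.
case: s => [|a s] /=; first by rewrite divn1 (negbTE n_composite).
apply: iff_trans (branch_stepsP (a :: s) (dvd1n n) n_gt1) => /=.
suff L_multiples x : L x <-> proper_multiples L 1 x.
  by split=> -[a_min steps]; split=> //; apply/(in_overline_ext L_multiples).
apply: iff_trans (iff_sym (proper_multiplesE 1 x)); rewrite dvd1n.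
apply: iff_trans (L_divisor x) _.
split=> [x_div | /andP[]//]; case/and3P: (x_div) => x_gt1 _ _.
by rewrite x_div (gtn_eqF x_gt1).
Qed.

Lemma branch_sizes_prime_factors s :
  branch L s -> perm_eq (branch_sizes n s) (prime_factors n).
Proof.
move=> s_branch; have s_neq0 : s != [::] by case: s s_branch.
move/branchP: s_branch => /(prime_chain_ratios (dvd1n n))[ratios_prime ratios_prod].
rewrite branch_sizesE //; apply/perm_prime_factorsP; first exact: ltnW.
by rewrite mul1n in ratios_prod.
Qed.

Lemma perm_prime_factors_chain r : perm_eq r (prime_factors n) ->
  prime_chain 1 (partial_products 1 r) /\ chain_ratios 1 (partial_products 1 r) = r.
Proof.
case/(perm_prime_factorsP _ (ltnW n_gt1)) => r_prime r_prod.
have r_neq0 : r != [::] by apply: contraTneq n_gt1 => r0; rewrite -r_prod r0 big_nil.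
by split; [apply: prime_chain_partial_products | apply: partial_productsK]; rewrite ?mul1n.
Qed.

Lemma branchE s :
  branch L s <-> exists2 r, perm_eq r (prime_factors n) & s = partial_products 1 r.
Proof.
split=> [s_branch | [r /perm_prime_factors_chain[chain _] ->]]; last exact/branchP.
exists (branch_sizes n s); first exact: branch_sizes_prime_factors.
have s_neq0 : s != [::] by case: s s_branch.
by rewrite branch_sizesE // chain_ratiosK //; apply/branchP.
Qed.

End DivisorChains.

Theorem theorem1 (n : nat) (A : 'M[bool]_n) (hA : maximal A) :
  [/\ (forall s, branch (Lset A) s -> all (fun k => k \in primes n) (branch_sizes n s)),
      (forall s, branch (Lset A) s ->
         size (branch_sizes n s) = \sum_(p <- primes n) logn p n) &
      exists bs : seq (seq nat),
        [/\ uniq bs, (forall s, s \in bs <-> branch (Lset A) s) &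
            size bs = (\sum_(p <- primes n) logn p n)`! %/
                      \prod_(p <- primes n) (logn p n)`!]].
Proof.
have [n_gt1 n_composite] := decomposable_composite hA.1.
have branch_perm := branch_sizes_prime_factors (Lset_maximal hA) n_gt1 n_composite.
have chainK r := proj2 (perm_prime_factors_chain n_gt1 r).
split=> [s /branch_perm s_perm | s /branch_perm/perm_size -> |].
- by apply/allP => k; rewrite (perm_mem s_perm) mem_prime_factors.
- exact: size_prime_factors.
exists [seq partial_products 1 r | r <- permutations (prime_factors n)]; split.
- rewrite map_inj_in_uniq ?permutations_uniq // => r1 r2.
  by rewrite !mem_permutations => /chainK r1K /chainK r2K r12; rewrite -r1K r12 r2K.
- move=> s; apply: iff_trans (iff_sym (branchE (Lset_maximal hA) n_gt1 n_composite s)).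
  split=> [/mapP[r] | [r r_perm ->]]; first by rewrite mem_permutations; exists r.
  by apply: map_f; rewrite mem_permutations.
have sub_primes : {subset prime_factors n <= primes n}.
  by move=> p; rewrite mem_prime_factors.
have := size_permutations_count (primes_uniq n) sub_primes.
rewrite size_map size_prime_factors.
under eq_bigr => p _ do rewrite count_prime_factors.
by move=> <-; rewrite mulnK // prodn_gt0 // => p; apply: fact_gt0.
Qed.
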